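(* Let $w,w'\in W^{\mathfrak p}$. Every circle of the circle diagram $\overline{C(w')}C(w)$ that has a self-intersection (i.e. contains both arcs of some linked pair of cups or of caps) is colored red.
   Context: Let $n\ge4$, $W$ the Weyl group of type $D_n$ with simple reflections $s_0,\dots,s_{n-1}$ ($s_0,s_1$ both joined to $s_2$, $s_i$ joined to $s_{i+1}$ for $i\ge2$), $W_{\mathfrak p}=\langle s_1,\dots,s_{n-1}\rangle$, $W^{\mathfrak p}$ the minimal length representatives of $W_{\mathfrak p}\backslash W$. For $w\in W^{\mathfrak p}$ let $(\alpha_1,\dots,\alpha_n)=(+,\dots,+)\cdot w$ for the right action on $\{+,-\}^n$ where $s_i$ ($i\ge1$) swaps entries $i,i+1$ and $s_0$ sends $(a_1,a_2,\dots)$ to $(-a_2,-a_1,\dots)$; set $\alpha_{-i}=-\alpha_i$. Label $P=\{-2n,\dots,-1,1,\dots,2n\}$ by $+$ at $j<-n$, $-$ at $j>n$, $\alpha_j$ at $1\le|j|\le n$. The cup diagram $C(w)$ is obtained from the unique non-crossing matching of $P$ by arcs in the lower half plane joining each $+$ to a $-$ on its right, by replacing, for the arcs $(-y_1,y_1),\dots,(-y_{2k},y_{2k})$ crossing $0$ ($y_1<\dots<y_{2k}$), each pair $(-y_{2j-1},y_{2j-1}),(-y_{2j},y_{2j})$ by the two arcs joining $-y_{2j}$ to $y_{2j-1}$ and $-y_{2j-1}$ to $y_{2j}$ (a linked pair of cups, crossing on $x=0$). The cap diagram $\overline{C(w')}$ is the reflection of $C(w')$ in the horizontal axis, with linked pairs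 of caps the reflected linked pairs. The circle diagram $\overline{C(w')}C(w)$ is the union of cups and caps; it is a union of closed curves (circles). A circle meets a linked pair if it contains at least one of its arcs. Points $>n$ are upper outer points and points $<-n$ are lower outer points. Coloring of a circle: black if it passes through no outer point and the number of distinct linked pairs it meets is even; red if it passes through more than one upper outer point, or more than one lower outer point, or the number of distinct linked pairs it meets is odd; green otherwise. *)

From mathcomp Require Import all_boot all_order.
From mathcomp Require Import ssralg ssrnum ssrint.
Import Order.TTheory GRing.Theory Num.Theory.
Set Implicit Arguments. Unset Strict Implicit. Unset Printing Implicit Defensive.

(* The Weyl group W of type D_n, generators s_0,...,s_{n-1}.           *)
(* Elements are represented by words (seq 'I_n, index i = s_i).        *)
(* Everything is a RIGHT action: x . (s_i1 ... s_ik) = (..(x.s_i1)..).s_ik *)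

(* generic right action of s_i on vectors indexed 1..n:
   s_i (i>=1) swaps entries i,i+1; s_0 sends (a1,a2,..) to (-a2,-a1,..). *)
Definition gen_act (T : Type) (neg : T -> T) (i : nat) (a : nat -> T) : nat -> T :=
  fun j =>
    if i == 0 then
      (if j == 1 then neg (a 2) else if j == 2 then neg (a 1) else a j)
    else
      (if j == i then a i.+1 else if j == i.+1 then a i else a j).

Definition word_act (T : Type) (neg : T -> T) (n : nat) (w : seq 'I_n)
  (a : nat -> T) : nat -> T :=
  foldl (fun b (i : 'I_n) => gen_act neg i b) a w.

(* W is realised faithfully through its reflection representation on Z^n:
   two words represent the same element of W iff they act identically. *)
Definition weq (n : nat) (w v : seq 'I_n) : Prop :=
  forall (x : nat -> int) (j : nat),
    word_act (fun z : int => (- z)%R) w x j = word_act (fun z : int => (- z)%R) v x j.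

(* w is a word of minimal length in its right coset W_p w, where
   W_p = <s_1,...,s_{n-1}>; i.e. w is a reduced word of an element of W^p. *)
Definition min_coset_rep (n : nat) (w : seq 'I_n) : Prop :=
  forall u v : seq 'I_n, all (fun i : 'I_n => 0 < i) u ->
    weq v (u ++ w) -> size w <= size v.

(* (alpha_1,...,alpha_n) = (+,...,+) . w ; true = '+', false = '-' *)
Definition alpha_of (n : nat) (w : seq 'I_n) : nat -> bool :=
  word_act negb w (fun _ => true).

(* Points P = {-2n,...,-1,1,...,2n}, indexed by positions k : 'I_(4n)  *)
(* in increasing order.                                                *)
Definition pt (n k : nat) : int :=
  if k < 2 * n then (k%:Z - (2 * n)%:Z)%R else (k%:Z - (2 * n)%:Z + 1)%R.

Definition lab (n : nat) (alpha : nat -> bool) (k : nat) : bool :=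
  let p := pt n k in
  if (p < - (n%:Z))%R then true
  else if (n%:Z < p)%R then false
  else if (0 < p)%R then alpha (absz p)
  else ~~ alpha (absz p).

(* m is the (unique) non-crossing matching of P joining each + to a -
   on its right (m x = partner of x). *)
Definition is_cup_matching (n : nat) (alpha : nat -> bool)
  (m : 'I_(4 * n) -> 'I_(4 * n)) : Prop :=
  [/\ forall x : 'I_(4 * n), m (m x) = x,
      forall x : 'I_(4 * n), lab n alpha x != lab n alpha (m x),
      forall x : 'I_(4 * n), lab n alpha x -> x < m x
    & forall x y : 'I_(4 * n), x < m x -> y < m y -> ~~ [&& x < y, y < m x & m x < m y]].

(* right endpoints y_1 < ... < y_2k (positions) of the arcs crossing 0 *)
Definition crossR (n : nat) (m : 'I_(4 * n) -> 'I_(4 * n)) : seq 'I_(4 * n) :=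
  [seq b : 'I_(4 * n) <- enum 'I_(4 * n) | (2 * n <= b) && (m b < 2 * n)].

(* partner of a crossing right endpoint in its linked pair *)
Definition lpartner (n : nat) (m : 'I_(4 * n) -> 'I_(4 * n)) (x : 'I_(4 * n)) :
  'I_(4 * n) :=
  let ys := crossR m in
  if x \in ys then
    let i := index x ys in
    let i' := if odd i then i.-1 else i.+1 in
    if i' < size ys then nth x ys i' else x
  else x.

(* the cup diagram C: each pair (-y_{2j-1},y_{2j-1}),(-y_{2j},y_{2j}) is
   replaced by the arcs joining -y_{2j} to y_{2j-1} and -y_{2j-1} to y_{2j} *)
Definition cupC (n : nat) (m : 'I_(4 * n) -> 'I_(4 * n)) (x : 'I_(4 * n)) :
  'I_(4 * n) :=
  if x \in crossR m then m (lpartner m x)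
  else if m x \in crossR m then lpartner m (m x)
  else m x.

(* number of linked pairs; pair j (0-based) consists of the two arcs through
   the right endpoints ys[2j] and ys[2j+1] *)
Definition nlinked (n : nat) (m : 'I_(4 * n) -> 'I_(4 * n)) : nat :=
  (size (crossR m))./2.

Definition lp1 n (m : 'I_(4 * n) -> 'I_(4 * n)) (j : nat) : nat :=
  nth 0 (map val (crossR m)) j.*2.
Definition lp2 n (m : 'I_(4 * n) -> 'I_(4 * n)) (j : nat) : nat :=
  nth 0 (map val (crossR m)) j.*2.+1.

(* circle diagram: cups of cupC m, caps of cupC m' *)
Definition cedge (n : nat) (m m' : 'I_(4 * n) -> 'I_(4 * n)) : rel 'I_(4 * n) :=
  fun x y => (cupC m x == y) || (cupC m' x == y).

Definition circle (n : nat) (m m' : 'I_(4 * n) -> 'I_(4 * n)) (x : 'I_(4 * n)) :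
  {set 'I_(4 * n)} := [set y | connect (cedge m m') x y].

Definition meets n (m : 'I_(4 * n) -> 'I_(4 * n)) (C : {set 'I_(4 * n)}) (j : nat) :
  bool := [exists y in C, (val y == lp1 m j) || (val y == lp2 m j)].

Definition contains_both n (m : 'I_(4 * n) -> 'I_(4 * n)) (C : {set 'I_(4 * n)})
  (j : nat) : bool :=
  [exists y in C, val y == lp1 m j] && [exists y in C, val y == lp2 m j].

Definition self_intersects (n : nat) (m m' : 'I_(4 * n) -> 'I_(4 * n))
  (x : 'I_(4 * n)) : Prop :=
  let C := circle m m' x in
  (exists2 j, j < nlinked m & contains_both m C j) \/
  (exists2 j, j < nlinked m' & contains_both m' C j).

Definition nmet n (m m' : 'I_(4 * n) -> 'I_(4 * n)) (C : {set 'I_(4 * n)}) : nat :=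
  count (meets m C) (iota 0 (nlinked m)) + count (meets m' C) (iota 0 (nlinked m')).

Inductive color := Black | Red | Green.

(* upper outer points: pt > n  (positions >= 3n);
   lower outer points: pt < -n (positions < n) *)
Definition circle_color (n : nat) (m m' : 'I_(4 * n) -> 'I_(4 * n))
  (x : 'I_(4 * n)) : color :=
  let C := circle m m' x in
  let up := #|[set y in C | 3 * n <= val y]| in
  let low := #|[set y in C | val y < n]| in
  let k := nmet m m' C in
  if (up == 0) && (low == 0) && ~~ odd k then Black
  else if [|| 1 < up, 1 < low | odd k] then Red
  else Green.

From mathcomp Require Import all_boot all_order.
From mathcomp Require Import ssralg ssrnum ssrint.
From mathcomp Require Import zify.
Set Implicit Arguments. Unset Strict Implicit. Unset Printing Implicit Defensive.

(* A circle containing both arcs of a linked pair contains a point y together with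
   its mirror image -y; as the cup and cap diagrams are invariant under x |-> -x,
   the whole circle is then mirror symmetric.  Walking along it, alternating cups
   and caps, the reflection acts as a rotation by half a turn, and during one half
   turn the walk passes from one side of the axis x = 0 to the other, i.e. crosses
   it an odd number of times.  Hence the circle has 2 mod 4 arcs crossing the axis.
   Only the arcs of linked pairs cross the axis, and a symmetric circle meeting one
   arc of a linked pair contains both, so it meets an odd number of linked pairs
   and is red. *)

Section CircleParity.
Variables (T : finType) (cup cap refl : T -> T) (pos : T -> bool).
Hypotheses (cupK : involutive cup) (capK : involutive cap) (reflK : involutive refl).
Hypotheses (cup_neq : forall v, cup v != v) (cap_neq : forall v, cap v != v).
Hypotheses (cup_refl : forall v, cup (refl v) = refl (cup v))
  (cap_refl : forall v, cap (refl v) = refl (cap v)).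
Hypotheses (refl_cup_neq : forall v, refl (cup v) != v)
  (refl_cap_neq : forall v, refl (cap v) != v).
Hypothesis pos_refl : forall v, pos (refl v) = ~~ pos v.

Definition cup_cap_edge : rel T := fun a b => (cup a == b) || (cap a == b).
Local Notation edge := cup_cap_edge.

Lemma cup_cap_edge_sym : symmetric edge.
Proof.
have flip f : involutive f -> forall a b : T, (f a == b) = (f b == a).
  by move=> fK a b; apply/eqP/eqP => <-.
by move=> a b; rewrite /edge (flip _ cupK) (flip _ capK).
Qed.

Lemma connect_edge_refl a b : connect edge a b -> connect edge (refl a) (refl b).
Proof.
move=> ab; have refl_edge u v : edge u v -> edge (refl u) (refl v).
  by case/orP => /eqP <-; rewrite /edge cup_refl cap_refl !eqxx ?orbT.
have closed_refl : closed edge [pred z | connect edge (refl a) (refl z)].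
  move=> u v uv; rewrite !inE; apply/idP/idP => h.
  - exact: connect_trans h (connect1 (refl_edge _ _ uv)).
  - by apply: connect_trans h (connect1 _); rewrite cup_cap_edge_sym; exact: refl_edge.
by have := closed_connect closed_refl ab; rewrite !inE connect0 => <-.
Qed.

Lemma connect_edge_refl_self x y :
  connect edge x y -> connect edge x (refl y) -> connect edge x (refl x).
Proof.
move=> xy x_ry; apply: connect_trans x_ry _.
by rewrite (sym_connect_sym cup_cap_edge_sym); exact: connect_edge_refl.
Qed.

Definition turn (v : T) := cap (cup v).

Lemma turn_inj : injective turn.
Proof. by move=> a b /(congr1 (cup \o cap)); rewrite /= /turn !capK !cupK. Qed.

Lemma iter_turn_inj k : injective (iter k turn).
Proof. by elim: k => [|k IH] a b //= /turn_inj/IH. Qed.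

Lemma turn_refl v : turn (refl v) = refl (turn v).
Proof. by rewrite /turn cup_refl cap_refl. Qed.

Lemma iter_turn_refl k v : iter k turn (refl v) = refl (iter k turn v).
Proof. by elim: k => //= k ->; exact: turn_refl. Qed.

(* A reversal of a cycle either fixes a point or swaps two adjacent points. *)
Lemma orbit_reversal_fixpoint (phi : T -> T)
    (turn_phi : forall v, turn (phi (turn v)) = phi v) x :
  fconnect turn x (phi x) -> exists z, phi z = z \/ phi z = turn z.
Proof.
move=> x_phix.
have iter_phi k v : iter k turn (phi (iter k turn v)) = phi v.
  by elim: k v => [|k IH] v //; rewrite [iter k.+1 _ v]iterS iterSr turn_phi IH.
have [t Ht] : exists t, iter t turn x = phi x.
  by exists (findex turn x (phi x)); exact: iter_findex.
have et : t = t./2 + odd t + t./2 by have := odd_double_half t; rewrite -addnn; lia.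
exists (iter t./2 turn x).
have : iter t./2 turn (phi (iter t./2 turn x)) =
       iter t./2 turn (iter (odd t) turn (iter t./2 turn x)).
  by rewrite iter_phi -Ht -!iterD; congr iter; lia.
by move/iter_turn_inj => ->; case: (odd t); [right | left].
Qed.

(* [turn] moves two steps along a circle, so its orbits see every other point. *)
Lemma fconnect_turn_cup x y : fconnect turn x y -> ~~ fconnect turn x (cup y).
Proof.
move=> xy; apply/negP => x_cupy.
have y_cupy : fconnect turn y (cup y).
  by apply: connect_trans x_cupy; rewrite fconnect_sym //; exact: turn_inj.
have turn_cup v : turn (cup (turn v)) = cup v by rewrite /turn !cupK capK.
have [z [Hz | Hz]] := orbit_reversal_fixpoint turn_cup y_cupy.
- by move: (cup_neq z); rewrite Hz eqxx.
- by move: (cap_neq (cup z)); rewrite /turn in Hz; rewrite -Hz eqxx.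
Qed.

Lemma connect_edgeE x v :
  connect edge x v = fconnect turn x v || fconnect turn x (cup v).
Proof.
apply/idP/orP.
- have closed_rhs : closed edge [pred y | fconnect turn x y || fconnect turn x (cup y)].
    move=> a b /orP[] /eqP <-; rewrite !inE; first by rewrite cupK orbC.
    have e1 : fconnect turn x (cap a) = fconnect turn x (cup a).
      by rewrite (same_fconnect1_r turn_inj x (cup a)) /turn cupK.
    have e2 : fconnect turn x (cup (cap a)) = fconnect turn x a.
      by rewrite (same_fconnect1_r turn_inj x (cup (cap a))) /turn cupK capK.
    by rewrite e1 e2 orbC.
  move=> xv; apply/orP.
  by have := closed_connect closed_rhs xv; rewrite !inE connect0 => <-.
- have turn_edge : subrel (frel turn) (connect edge).
    move=> a b /eqP <-; apply: (@connect_trans _ _ (cup a)); apply: connect1.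
      by rewrite /edge eqxx.
    by rewrite /edge /turn eqxx orbT.
  case=> [xv | x_cupv]; first exact: (connect_sub turn_edge xv).
  apply: connect_trans (connect_sub turn_edge x_cupv) (connect1 _).
  by rewrite /edge cupK eqxx.
Qed.

Lemma sum_connect_edge (P : pred T) x :
  \sum_v (connect edge x v && P v : nat) =
  \sum_v (fconnect turn x v * (P v + P (cup v))).
Proof.
rewrite (eq_bigr (fun v => fconnect turn x v * P v + fconnect turn x (cup v) * P v));
  last first.
  move=> v _; rewrite connect_edgeE; have := @fconnect_turn_cup x v.
  by case: (fconnect turn x v); case: (fconnect turn x (cup v)); case: (P v) => H;
    rewrite ?mul0n ?mul1n ?addn0 ?add0n //; case/negP: (H isT).
rewrite big_split /= [X in _ + X](reindex_inj (inv_inj cupK)) -big_split /=.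
by apply: eq_bigr => v _; rewrite cupK mulnDr.
Qed.

Lemma sum_fconnect_turn (F : T -> nat) x :
  \sum_v (fconnect turn x v * F v) = \sum_(k < order turn x) F (iter k turn x).
Proof.
have sum_traject k y :
    \sum_(v <- traject turn y k) F v = \sum_(i < k) F (iter i turn y).
  elim: k y => [|k IH] y; first by rewrite big_nil big_ord0.
  rewrite trajectS big_cons big_ord_recl IH; congr (_ + _).
  by apply: eq_bigr => i _; rewrite /bump /= -iterSr.
rewrite -sum_traject -/(orbit turn x).
rewrite [RHS]big_uniq ?orbit_uniq // [RHS]big_mkcond /=.
by apply: eq_bigr => v _; rewrite -fconnect_orbit; case: (fconnect turn x v); rewrite ?mul1n.
Qed.

Definition side_changes v : nat := (pos v != pos (cup v)) + (pos (cup v) != pos (turn v)).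

Lemma side_changes_refl v : side_changes (refl v) = side_changes v.
Proof.
by rewrite /side_changes turn_refl cup_refl !pos_refl;
  case: (pos v); case: (pos (cup v)); case: (pos (turn v)).
Qed.

Lemma odd_sum_side_changes x t :
  odd (\sum_(k < t) side_changes (iter k turn x)) = (pos x != pos (iter t turn x)).
Proof.
elim: t => [|t IH]; first by rewrite big_ord0 eqxx.
rewrite big_ord_recr /= oddD IH /side_changes.
by case: (pos x); case: (pos (iter t turn x)); case: (pos (cup (iter t turn x)));
  case: (pos (turn (iter t turn x))).
Qed.

Lemma fconnect_turn_refl x : connect edge x (refl x) -> fconnect turn x (refl x).
Proof.
rewrite connect_edgeE => /orP[] // x_rcx; exfalso.
have turn_rc v : turn (refl (cup (turn v))) = refl (cup v).
  by rewrite turn_refl /turn !cupK capK.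
have x_rcx' : fconnect turn x ((refl \o cup) x) by rewrite /= -cup_refl.
have [z [Hz | Hz]] := orbit_reversal_fixpoint turn_rc x_rcx'.
- by move: (refl_cup_neq z); rewrite /= Hz eqxx.
- by move: (refl_cap_neq (cup z)); rewrite /turn /= in Hz; rewrite -Hz reflK eqxx.
Qed.

Lemma order_turn_refl x : fconnect turn x (refl x) ->
  exists2 t, iter t turn x = refl x & order turn x = t + t.
Proof.
move=> x_rx; set t := findex turn x (refl x).
have Ht : iter t turn x = refl x by exact: iter_findex.
have t_lt : t < order turn x by exact: findex_max.
have t_neq0 : t != 0.
  by apply/eqP => t0; move: (pos_refl x); rewrite -Ht t0; case: (pos x).
have H2 : iter (t + t) turn x = x by rewrite iterD Ht iter_turn_refl Ht reflK.
exists t => //; case: (ltngtP (t + t) (order turn x)) => // h.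
  by move: (findex_iter h); rewrite H2 findex0; lia.
have hu : t + t - order turn x < order turn x by lia.
have : iter (t + t - order turn x) turn x = x.
  have E : iter (t + t) turn x = iter (t + t - order turn x) turn (iter (order turn x) turn x).
    by rewrite -iterD subnK // ltnW.
  by rewrite (iter_order turn_inj) H2 in E.
by move/(congr1 (findex turn x)); rewrite (findex_iter hu) findex0; lia.
Qed.

Lemma symmetric_circle_crossings x : connect edge x (refl x) ->
  (\sum_v (connect edge x v && (pos v && ~~ pos (cup v)) : nat) +
   \sum_v (connect edge x v && (pos v && ~~ pos (cap v)) : nat)) %% 4 = 2.
Proof.
move=> x_rx.
have sum_cup : \sum_v (connect edge x v && (pos v && ~~ pos (cup v)) : nat) =
               \sum_v (fconnect turn x v * (pos v != pos (cup v))).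
  rewrite sum_connect_edge; apply: eq_bigr => v _; rewrite cupK.
  by case: (pos v); case: (pos (cup v)).
have sum_cap : \sum_v (connect edge x v && (pos v && ~~ pos (cap v)) : nat) =
               \sum_v (fconnect turn x v * (pos (cup v) != pos (turn v))).
  rewrite sum_connect_edge; under eq_bigr => v _ do rewrite mulnDr.
  rewrite big_split /= [X in X + _](reindex_inj turn_inj) -big_split /=.
  apply: eq_bigr => v _; rewrite -(same_fconnect1_r turn_inj) -mulnDr /turn capK.
  by case: (pos (cup v)); case: (pos (cap (cup v))).
rewrite sum_cup sum_cap -big_split /=.
rewrite (eq_bigr (fun v => fconnect turn x v * side_changes v)) ?sum_fconnect_turn;
  last by move=> v _; rewrite -mulnDr.
have [t Ht ->] := order_turn_refl (fconnect_turn_refl x_rx).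
rewrite big_split_ord /=.
rewrite [X in _ + X](eq_bigr (fun k : 'I_t => side_changes (iter k turn x))); last first.
  by move=> k _; rewrite addnC iterD Ht iter_turn_refl side_changes_refl.
have := odd_sum_side_changes x t; rewrite Ht pos_refl; case: (pos x) => /= HS;
  have : (\sum_(k < t) side_changes (iter k turn x)) %% 2 = 1 by rewrite modn2 HS.
all: lia.
Qed.

End CircleParity.

Lemma pt_rev_ord n k : k < 4 * n -> pt n (4 * n - k.+1) = (- pt n k)%R.
Proof. by rewrite /pt => hk; case: ifP => h1; case: ifP => h2; lia. Qed.

Lemma pt_neq0 n k : pt n k != 0%R.
Proof. by rewrite /pt; case: ifP => h1; lia. Qed.

Lemma lab_rev_ord n alpha (k : 'I_(4 * n)) : lab n alpha (rev_ord k) = ~~ lab n alpha k.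
Proof.
rewrite /lab /= pt_rev_ord // abszN.
have := pt_neq0 n k; move: (pt n k) => p p_neq0.
by case: ifP => h1; case: ifP => h2; try lia; case: ifP => h3; try lia;
  case: ifP => h4; try lia; case: ifP => h5; try lia; try case: ifP => h6; try lia;
  rewrite ?negbK.
Qed.

Section NonCrossingMatching.
Variables (N : nat) (L : 'I_N -> bool).

Definition noncrossing_matching (m : 'I_N -> 'I_N) : Prop :=
  [/\ forall x : 'I_N, m (m x) = x,
      forall x : 'I_N, L x != L (m x),
      forall x : 'I_N, L x -> x < m x
    & forall x y : 'I_N, x < m x -> y < m y -> ~~ [&& x < y, y < m x & m x < m y]].

Variable m : 'I_N -> 'I_N.
Hypothesis hm : noncrossing_matching m.

Lemma matching_noncrossing (a b : 'I_N) :
  a < m a -> b < m b -> a < b -> b < m a -> m a < m b -> False.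
Proof. by case: hm => _ _ _ nc h1 h2 h3 h4 h5; move: (nc a b h1 h2); rewrite h3 h4 h5. Qed.

Lemma matching_nested (x z : 'I_N) :
  x < m x -> x < z -> z < m x -> x < m z /\ m z < m x.
Proof.
move=> h1 h2 h3; have [mK _ _ _] := hm.
have n1 : (m z : nat) != x.
  by apply/negP => /eqP /val_inj E; move: h3; rewrite -E mK; lia.
have n2 : (m z : nat) != m x.
  apply/negP => /eqP /val_inj E; move: (congr1 m E); rewrite !mK => E2.
  by move: h2; rewrite E2; lia.
case: (ltngtP (m z) x) => h4; last by move: n1; rewrite h4 eqxx.
- by exfalso; apply: (@matching_noncrossing (m z) x); rewrite ?mK //; lia.
case: (ltngtP (m z) (m x)) => h5; last by move: n2; rewrite h5 eqxx.
- by [].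
- by exfalso; apply: (@matching_noncrossing x z) => //; lia.
Qed.

Lemma matching_gt_unlabelled x : ~~ L x -> m x < x.
Proof.
move=> Lx; have [mK labN lt _] := hm.
have : L (m x) by move: (labN x); case: (L x) Lx; case: (L (m x)).
by move/lt; rewrite mK.
Qed.

End NonCrossingMatching.

Section MatchingUniqueness.
Variables (N : nat) (L : 'I_N -> bool) (m1 m2 : 'I_N -> 'I_N).
Hypotheses (h1 : noncrossing_matching L m1) (h2 : noncrossing_matching L m2).

Lemma matchings_agree_on_short_arcs d (x : 'I_N) : L x -> m1 x - x < d -> m1 x = m2 x.
Proof.
have [mK1 labN1 lt1 _] := h1; have [mK2 _ lt2 _] := h2.
elim: d x => [|d IH] x Lx hd; first lia.
have x_lt1 := lt1 x Lx; have x_lt2 := lt2 x Lx.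
have inner (z : 'I_N) : x < z -> z < m1 x -> m2 z = m1 z.
  move=> hz1 hz2; have [hm1 hm2] := matching_nested h1 x_lt1 hz1 hz2.
  case Lz: (L z); first by symmetry; apply: IH => //; have := lt1 z Lz; lia.
  have Lmz : L (m1 z) by move: (labN1 z); rewrite Lz; case: (L (m1 z)).
  have E : m1 (m1 z) = m2 (m1 z) by apply: IH => //; rewrite mK1; lia.
  by rewrite mK1 in E; rewrite {1}E mK2.
case: (ltngtP (m1 x) (m2 x)) => hab; last exact: val_inj.
- have [hz1 hz2] := matching_nested h2 x_lt2 x_lt1 hab.
  have La : ~~ L (m1 x) by move: (labN1 x); rewrite Lx; case: (L (m1 x)).
  have hz3 := matching_gt_unlabelled h2 La.
  have E := inner _ hz1 hz3; rewrite mK2 in E.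
  have [_ hh] := matching_nested h1 x_lt1 hz1 hz3.
  by move: hh; rewrite -E; lia.
- have E := inner _ x_lt2 hab; rewrite mK2 in E.
  have [hh _] := matching_nested h1 x_lt1 x_lt2 hab.
  by move: hh; rewrite -E; lia.
Qed.

Lemma noncrossing_matching_unique : m1 =1 m2.
Proof.
have [mK1 labN1 _ _] := h1; have [mK2 _ _ _] := h2.
move=> x; case Lx: (L x); first exact: (matchings_agree_on_short_arcs Lx (ltnSn _)).
have Lmx : L (m1 x) by move: (labN1 x); rewrite Lx; case: (L (m1 x)).
have := matchings_agree_on_short_arcs Lmx (ltnSn _).
by rewrite mK1 => E; rewrite {2}E mK2.
Qed.

End MatchingUniqueness.

Lemma even_sum_involution N (f : 'I_N -> 'I_N) (P : pred 'I_N) :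
  involutive f -> (forall v, f v != v) -> (forall v, P (f v) = P v) ->
  ~~ odd (\sum_v (P v : nat)).
Proof.
move=> fK f_neq fP.
rewrite (eq_bigr (fun v => (P v && (v < f v) : nat) + (P v && (f v < v)))); last first.
  move=> v _; have := f_neq v; case: (P v) => //=.
  by case: (ltngtP v (f v)) => // h /eqP []; apply: val_inj.
rewrite big_split /= [X in _ + X](reindex_inj (inv_inj fK)) /=.
under [X in _ + X]eq_bigr => v _ do rewrite fP fK.
by rewrite addnn odd_double.
Qed.

Lemma sum_ord_lt N k : \sum_(v < N) (v < k : nat) = minn k N.
Proof. by elim: N => [|N IH]; rewrite ?big_ord0 ?big_ord_recr /= ?IH; lia. Qed.

Lemma count_enum_ord N (P : pred 'I_N) : count P (enum 'I_N) = \sum_v (P v : nat).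
Proof.
rewrite -sum1_count big_enum_cond big_mkcond /=.
by apply: eq_bigr => v _; case: (P v).
Qed.

Lemma big_nat_double (f : nat -> nat) k :
  \sum_(0 <= i < k.*2) f i = \sum_(0 <= j < k) (f j.*2 + f j.*2.+1).
Proof.
elim: k => [|k IH]; first by rewrite !big_geq.
by rewrite doubleS !big_nat_recr //= IH addnA.
Qed.

Section CupDiagram.
Variables (n : nat) (alpha : nat -> bool) (m : 'I_(4 * n) -> 'I_(4 * n)).
Hypothesis hm : is_cup_matching alpha m.
Local Notation rv := (@rev_ord (4 * n)).
Local Notation ys := (crossR m).

Let hnc : noncrossing_matching (fun k : 'I_(4 * n) => lab n alpha k) m := hm.

Lemma matchingK : involutive m.
Proof. by case: hnc. Qed.

Lemma rev_ord_lt (x : 'I_(4 * n)) : (rv x < 2 * n) = (2 * n <= x).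
Proof. by rewrite /=; have := ltn_ord x; case: (leqP (2 * n) x); lia. Qed.

(* Reversal maps a non-crossing matching of the labels to another one, since
   it reverses the order of the points and negates the labels. *)
Lemma matching_rev_ord x : m (rv x) = rv (m x).
Proof.
have [mK labN lt nc] := hnc.
pose mr y := rv (m (rv y)).
suff h : noncrossing_matching (fun k : 'I_(4 * n) => lab n alpha k) mr.
  by rewrite (noncrossing_matching_unique hnc h) /mr rev_ordK.
split.
- by move=> y; rewrite /mr rev_ordK mK rev_ordK.
- move=> y; rewrite /mr lab_rev_ord -{1}(rev_ordK y) lab_rev_ord.
  by move: (labN (rv y)); case: (lab _ _ (rv y)); case: (lab _ _ (m (rv y))).
- move=> y Ly; have : ~~ lab n alpha (rv y) by rewrite lab_rev_ord Ly.
  move/(matching_gt_unlabelled hnc); rewrite /mr /=.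
  by have := ltn_ord y; have := ltn_ord (m (rv y)); lia.
- move=> a b; rewrite /mr /= => ha hb; apply/negP => /and3P [ab bma mab].
  apply: (matching_noncrossing hnc (a := m (rv b)) (b := m (rv a))); rewrite ?mK /=;
  move: ha hb ab bma mab; have := ltn_ord a; have := ltn_ord b;
  have := ltn_ord (m (rv a)); have := ltn_ord (m (rv b)); lia.
Qed.

Lemma mem_crossR b : (b \in ys) = (2 * n <= b) && (m b < 2 * n).
Proof. by rewrite mem_filter mem_enum andbT. Qed.

Lemma crossR_uniq : uniq ys.
Proof. exact: filter_uniq (enum_uniq _). Qed.

Lemma crossR_ge (x : 'I_(4 * n)) : x \in ys -> 2 * n <= x.
Proof. by rewrite mem_crossR => /andP []. Qed.

Lemma crossR_matching b : b \in ys -> m b = rv b.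
Proof.
rewrite mem_crossR => /andP [h1 h2]; apply: val_inj => /=.
have hb := ltn_ord b; have hmb := ltn_ord (m b).
case: (ltngtP (m b) (4 * n - b.+1)) => h //; exfalso.
- by apply: (matching_noncrossing hnc (a := m b) (b := rv b));
    rewrite ?matchingK ?matching_rev_ord /=; lia.
- by apply: (matching_noncrossing hnc (a := rv b) (b := m b));
    rewrite ?matchingK ?matching_rev_ord /=; lia.
Qed.

Lemma matching_crossR x : m x \in ys -> m x = rv x.
Proof. by move/crossR_matching; rewrite matchingK => E; rewrite {2}E rev_ordK. Qed.

(* The left half has an even number of points, and those not joined across 0
   are paired among themselves. *)
Lemma crossR_even : ~~ odd (size ys).
Proof.
rewrite size_filter count_enum_ord.
have -> : \sum_(v : 'I_(4 * n)) ((2 * n <= v) && (m v < 2 * n) : nat) =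
          \sum_(v : 'I_(4 * n)) ((v < 2 * n) && (2 * n <= m v) : nat).
  by rewrite (reindex_inj (inv_inj matchingK)); apply: eq_bigr => v _;
    rewrite matchingK andbC.
have split_left : \sum_(v < 4 * n) (v < 2 * n : nat) =
    \sum_(v : 'I_(4 * n)) ((v < 2 * n) && (m v < 2 * n) : nat) +
    \sum_(v : 'I_(4 * n)) ((v < 2 * n) && (2 * n <= m v) : nat).
  by rewrite -big_split; apply: eq_bigr => v _; case: (v < 2 * n); case: ltnP.
have inner_even : ~~ odd (\sum_(v : 'I_(4 * n)) ((v < 2 * n) && (m v < 2 * n) : nat)).
  apply: even_sum_involution matchingK _ _; last by move=> v; rewrite matchingK andbC.
  by move=> v; have [_ labN _ _] := hnc; apply/eqP => E; move: (labN v); rewrite E eqxx.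
move: split_left inner_even; rewrite sum_ord_lt => /(congr1 odd).
have -> : minn (2 * n) (4 * n) = n.*2 by lia.
by rewrite oddD odd_double; case: odd; case: odd.
Qed.

Lemma size_crossR : size ys = (nlinked m).*2.
Proof. by rewrite /nlinked even_halfK // crossR_even. Qed.

Definition linked_index i := if odd i then i.-1 else i.+1.

Lemma linked_index_lt i : i < size ys -> linked_index i < size ys.
Proof.
rewrite /linked_index size_crossR => hi; case oi: (odd i); first lia.
by rewrite ltn_neqAle hi andbT; apply/eqP => E; move: (odd_double (nlinked m)); rewrite -E /= oi.
Qed.

Lemma linked_indexK : involutive linked_index.
Proof. by case=> [|i] //; rewrite /linked_index /=; case oi: (odd i); rewrite /= ?negbK ?oi. Qed.

Lemma lpartner_nth x0 i : i < size ys -> lpartner m (nth x0 ys i) = nth x0 ys (linked_index i).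
Proof.
move=> hi; rewrite /lpartner mem_nth // index_uniq //; last exact: crossR_uniq.
by rewrite -/(linked_index i) linked_index_lt //; exact: set_nth_default (linked_index_lt hi).
Qed.

Lemma lpartner_facts x : x \in ys ->
  [/\ lpartner m x \in ys, lpartner m (lpartner m x) = x & lpartner m x != x].
Proof.
move=> hx; set i := index x ys.
have hi : i < size ys by rewrite index_mem.
have hli := linked_index_lt hi.
rewrite -(nth_index x hx) -/i !lpartner_nth ?linked_indexK //; split.
- exact: mem_nth.
- by [].
- rewrite nth_uniq ?crossR_uniq // /linked_index.
  by case oi: (odd i); apply/eqP; [case: i oi {hi hli} | ]; lia.
Qed.

Local Notation c := (cupC m).

Lemma cupC_cross x : x \in ys -> c x = rv (lpartner m x).
Proof.
by move=> hx; rewrite /cupC hx; have [h1 _ _] := lpartner_facts hx; exact: crossR_matching.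
Qed.

Lemma cupC_cross_partner x : x \notin ys -> m x \in ys -> c x = lpartner m (m x).
Proof. by move=> h1 h2; rewrite /cupC (negbTE h1) h2. Qed.

Lemma cupC_uncrossed x : x \notin ys -> m x \notin ys -> c x = m x.
Proof. by move=> h1 h2; rewrite /cupC (negbTE h1) (negbTE h2). Qed.

Lemma notin_crossR_lt (x : 'I_(4 * n)) : x < 2 * n -> x \notin ys.
Proof. by move=> h; rewrite mem_crossR; apply/negP => /andP []; lia. Qed.

Lemma cupCK : involutive c.
Proof.
move=> x; case hx: (x \in ys).
- have [h1 h2 h3] := lpartner_facts hx.
  have nu : rv (lpartner m x) \notin ys.
    by apply: notin_crossR_lt; rewrite rev_ord_lt; exact: crossR_ge.
  have mu : m (rv (lpartner m x)) = lpartner m x.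
    by rewrite matching_rev_ord crossR_matching // rev_ordK.
  by rewrite (cupC_cross hx) (cupC_cross_partner nu) mu.
have nx : x \notin ys by rewrite hx.
case hmx: (m x \in ys).
- have [h1 h2 _] := lpartner_facts hmx.
  by rewrite (cupC_cross_partner nx hmx) (cupC_cross h1) h2 (matching_crossR hmx) rev_ordK.
- have nmx : m x \notin ys by rewrite hmx.
  have nmx' : m (m x) \notin ys by rewrite matchingK.
  by rewrite (cupC_uncrossed nx nmx) (cupC_uncrossed nmx nmx') matchingK.
Qed.

Lemma cupC_neq x : c x != x.
Proof.
case hx: (x \in ys).
- rewrite cupC_cross //; have [h1 _ _] := lpartner_facts hx.
  apply/eqP => E; have := rev_ord_lt (lpartner m x).
  by rewrite E (crossR_ge h1); have := crossR_ge hx; lia.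
case hmx: (m x \in ys).
- rewrite cupC_cross_partner ?hx //; have [h1 _ _] := lpartner_facts hmx.
  by apply/eqP => E; move: h1; rewrite E hx.
- rewrite cupC_uncrossed ?hx ?hmx //; have [_ labN _ _] := hnc.
  by apply/eqP => E; move: (labN x); rewrite E eqxx.
Qed.

Lemma cupC_rev_ord x : c (rv x) = rv (c x).
Proof.
case hx: (x \in ys).
- have nr : rv x \notin ys.
    by apply: notin_crossR_lt; rewrite rev_ord_lt; exact: crossR_ge.
  have mr : m (rv x) = x by rewrite matching_rev_ord crossR_matching // rev_ordK.
  have hmr : m (rv x) \in ys by rewrite mr.
  by rewrite (cupC_cross_partner nr hmr) mr (cupC_cross hx) rev_ordK.
have nx : x \notin ys by rewrite hx.
case hmx: (m x \in ys).
- have rx : rv x = m x by rewrite matching_crossR.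
  by rewrite rx (cupC_cross hmx) (cupC_cross_partner nx hmx).
have nmx : m x \notin ys by rewrite hmx.
have n1 : rv x \notin ys.
  apply/negP => h; have := crossR_matching h; rewrite matching_rev_ord => /rev_ord_inj E.
  by move: hmx; rewrite E h.
have n2 : m (rv x) \notin ys.
  apply/negP => h; have := matching_crossR h; rewrite rev_ordK => E.
  by move: h; rewrite E hx.
by rewrite (cupC_uncrossed n1 n2) (cupC_uncrossed nx nmx) matching_rev_ord.
Qed.

Lemma rev_cupC_neq x : rv (c x) != x.
Proof.
case hx: (x \in ys).
- by have [_ _ h3] := lpartner_facts hx; rewrite (cupC_cross hx) rev_ordK.
have nx : x \notin ys by rewrite hx.
case hmx: (m x \in ys).
- have [_ _ h3] := lpartner_facts hmx.
  rewrite (cupC_cross_partner nx hmx); apply/eqP => E.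
  have E2 : lpartner m (m x) = m x.
    by apply: rev_ord_inj; rewrite E (matching_crossR hmx) rev_ordK.
  by rewrite E2 eqxx in h3.
have nmx : m x \notin ys by rewrite hmx.
rewrite (cupC_uncrossed nx nmx); apply/eqP => E.
have E2 : m x = rv x by apply: rev_ord_inj; rewrite E rev_ordK.
case: (leqP (2 * n) x) => h.
- have : x \in ys by rewrite mem_crossR h E2 rev_ord_lt h.
  by rewrite hx.
- have : m x \in ys by rewrite mem_crossR matchingK h andbT E2 leqNgt rev_ord_lt -ltnNge h.
  by rewrite hmx.
Qed.

Lemma mem_crossR_cupC x : (x \in ys) = (2 * n <= x) && (c x < 2 * n).
Proof.
case hx: (x \in ys).
- have [h1 _ _] := lpartner_facts hx.
  by rewrite (cupC_cross hx) (crossR_ge hx) rev_ord_lt (crossR_ge h1).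
have nx : x \notin ys by rewrite hx.
case hmx: (m x \in ys).
- have [h1 _ _] := lpartner_facts hmx.
  by rewrite (cupC_cross_partner nx hmx) ltnNge (crossR_ge h1) andbF.
- have nmx : m x \notin ys by rewrite hmx.
  by rewrite (cupC_uncrossed nx nmx) -mem_crossR hx.
Qed.

Section LinkedPair.
Variables (x0 : 'I_(4 * n)) (j : nat).
Hypothesis hj : j < nlinked m.
Local Notation y1 := (nth x0 ys j.*2).
Local Notation y2 := (nth x0 ys j.*2.+1).

Lemma linked_pair_lt : j.*2 < size ys /\ j.*2.+1 < size ys.
Proof. by rewrite size_crossR ltn_double -doubleS leq_double. Qed.

Lemma cupC_linked_pair : c y1 = rv y2.
Proof.
have [hj1 _] := linked_pair_lt.
by rewrite (cupC_cross (mem_nth x0 hj1)) (lpartner_nth _ hj1) /linked_index odd_double.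
Qed.

Lemma exists_linked_pair (C : {set 'I_(4 * n)}) :
  ([exists y in C, val y == lp1 m j] = (y1 \in C)) /\
  ([exists y in C, val y == lp2 m j] = (y2 \in C)).
Proof.
have [hj1 hj2] := linked_pair_lt.
have ex_val y : [exists z in C, val z == val y] = (y \in C).
  by apply/existsP/idP => [[z /andP [zC /eqP /val_inj <-]] | yC] //; exists y; rewrite yC eqxx.
by rewrite /lp1 /lp2 !(nth_map x0) // !ex_val.
Qed.

Lemma meets_linked_pair (C : {set 'I_(4 * n)}) : meets m C j = (y1 \in C) || (y2 \in C).
Proof.
have [<- <-] := exists_linked_pair C; rewrite /meets.
apply/existsP/orP => [[y /andP [yC /orP [] e]] | [] /existsP [y /andP [yC e]]].
- by left; apply/existsP; exists y; rewrite yC.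
- by right; apply/existsP; exists y; rewrite yC.
- by exists y; rewrite yC e.
- by exists y; rewrite yC e orbT.
Qed.

End LinkedPair.

Lemma sum_axis_crossings (x0 : 'I_(4 * n)) (C : {set 'I_(4 * n)}) :
  (forall y, y \in C -> c y \in C) -> (forall y, y \in C -> rv y \in C) ->
  \sum_v ((v \in C) && ((2 * n <= v) && ~~ (2 * n <= c v)) : nat) =
  2 * count (meets m C) (iota 0 (nlinked m)).
Proof.
move=> Cc Crv.
have -> : \sum_v ((v \in C) && ((2 * n <= v) && ~~ (2 * n <= c v)) : nat) =
          count (mem C) ys.
  rewrite count_filter count_enum_ord; apply: eq_bigr => v _.
  by rewrite /= -ltnNge -mem_crossR_cupC mem_crossR.
rewrite -sum1_count big_mkcond (big_nth x0) size_crossR big_nat_double.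
rewrite -sum1_count big_mkcond big_distrr /=.
rewrite [RHS]big_mkcond /index_iota subn0; apply: eq_big_seq => j.
rewrite mem_iota add0n => /andP [_ hj]; rewrite (meets_linked_pair x0 hj C).
have same_side : (nth x0 ys j.*2 \in C) = (nth x0 ys j.*2.+1 \in C).
  have e := cupC_linked_pair x0 hj.
  apply/idP/idP => [/Cc | /Crv]; first by rewrite e => /Crv; rewrite rev_ordK.
  by rewrite -e => /Cc; rewrite cupCK.
by rewrite same_side orbb; case: (_ \in C).
Qed.

Lemma contains_both_refl (C : {set 'I_(4 * n)}) j : j < nlinked m ->
  (forall y, y \in C -> c y \in C) -> contains_both m C j -> exists2 y, y \in C & rv y \in C.
Proof.
move=> hj Cc /andP [e1 e2]; have /existsP [x0 _] := e1.
have [ex1 ex2] := exists_linked_pair x0 hj C; rewrite ex1 in e1; rewrite ex2 in e2.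
by exists (nth x0 ys j.*2.+1); rewrite // -(cupC_linked_pair x0 hj); exact: Cc.
Qed.

End CupDiagram.

Section Circles.
Variables (n : nat) (alpha alpha' : nat -> bool) (m m' : 'I_(4 * n) -> 'I_(4 * n)).
Hypotheses (hm : is_cup_matching alpha m) (hm' : is_cup_matching alpha' m').
Variable x : 'I_(4 * n).
Local Notation rv := (@rev_ord (4 * n)).
Local Notation C := (circle m m' x).

Lemma mem_circle y : (y \in C) = connect (cedge m m') x y.
Proof. by rewrite inE. Qed.

Lemma circle_cupC y : y \in C -> cupC m y \in C.
Proof. by rewrite !mem_circle => xy; apply: connect_trans xy (connect1 _); rewrite /cedge eqxx. Qed.

Lemma circle_capC y : y \in C -> cupC m' y \in C.
Proof.
by rewrite !mem_circle => xy; apply: connect_trans xy (connect1 _); rewrite /cedge eqxx orbT.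
Qed.

Lemma self_intersects_symmetric :
  self_intersects m m' x -> connect (cedge m m') x (rv x).
Proof.
move=> SI; have [y yC ryC] : exists2 y, y \in C & rv y \in C.
  case: SI => [[j hj hb] | [j hj hb]].
  - by apply: (contains_both_refl hm hj _ hb) => y; exact: circle_cupC.
  - by apply: (contains_both_refl hm' hj _ hb) => y; exact: circle_capC.
rewrite !mem_circle in yC ryC.
exact: (connect_edge_refl_self (cupCK hm) (cupCK hm') (cupC_rev_ord hm) (cupC_rev_ord hm') yC ryC).
Qed.

Lemma odd_nmet_symmetric : connect (cedge m m') x (rv x) -> odd (nmet m m' C).
Proof.
move=> x_rx.
have Crv y : y \in C -> rv y \in C.
  rewrite !mem_circle => /(connect_edge_refl (cupCK hm) (cupCK hm')
    (cupC_rev_ord hm) (cupC_rev_ord hm')); exact: connect_trans.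
have pos_rv (v : 'I_(4 * n)) : (2 * n <= rv v) = ~~ (2 * n <= v) by rewrite leqNgt rev_ord_lt.
have := symmetric_circle_crossings (cupCK hm) (cupCK hm') (@rev_ordK _) (cupC_neq hm)
  (cupC_neq hm') (cupC_rev_ord hm) (cupC_rev_ord hm') (rev_cupC_neq hm) (rev_cupC_neq hm')
  pos_rv x_rx.
under eq_bigr => v _ do rewrite -mem_circle.
under [X in _ + X]eq_bigr => v _ do rewrite -mem_circle.
rewrite (sum_axis_crossings hm x (@circle_cupC) Crv) (sum_axis_crossings hm' x (@circle_capC) Crv).
rewrite -mulnDr /nmet; set k := _ + _ => /eqP.
by rewrite -(odd_double_half k) -addnn; case: (odd k); lia.
Qed.

End Circles.

Theorem corollary3p8 (n : nat) (hn : 4 <= n) (w w' : seq 'I_n)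
  (hw : min_coset_rep w) (hw' : min_coset_rep w')
  (m m' : 'I_(4 * n) -> 'I_(4 * n))
  (hm : is_cup_matching (alpha_of w) m)
  (hm' : is_cup_matching (alpha_of w') m')
  (x : 'I_(4 * n)) :
  self_intersects m m' x -> circle_color m m' x = Red.
Proof.
move=> /(self_intersects_symmetric hm hm') /(odd_nmet_symmetric hm hm') odd_met.
by rewrite /circle_color odd_met andbF !orbT.
Qed.
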